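(* Let $G$ be a finite group with the supercharacter theory for which $\mathrm{scf}(G)=\mathbb{C}\text{-span}\{\mathbb{1},\mathbf{reg}\}$, and let $\iota,\alpha,\beta\in\mathrm{scf}(G)$ with $\langle\iota,\alpha\rangle=\langle\iota,\beta\rangle=1$. Let $S$ be the antipode of $\mathcal{H}_{(\iota,\alpha,\beta)}$ and $n\ge1$. (Case $\alpha=\beta$.) If $\tau\in\mathrm{scf}(G)$ is nonzero with $\langle\tau,\beta\rangle=0$ and $\mathbb{C}\text{-span}\{\tau,\iota\}=\mathrm{scf}(G)$, then $S(\tau^{\otimes(n-1)}\otimes\chi^{()})=-\tau^{\otimes(n-1)}\otimes\chi^{()}$. (Case $\alpha\ne\beta$.) If $\tau\in\mathrm{scf}(G)$ satisfies $\langle\tau,\alpha\rangle=1$ and $\langle\tau,\beta\rangle=0$, then $S(\tau^{\otimes(n-1)}\otimes\chi^{()})=-(\tau-\iota)^{\otimes(n-1)}\otimes\chi^{()}$.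
   Context: $G$ is a nontrivial finite group; the supercharacter theory has superclasses $\{1\}$ and $G\setminus\{1\}$ and supercharacters $\mathbb{1}$ (trivial character) and $\mathbf{reg}-\mathbb{1}$ ($\mathbf{reg}$ the regular character), so $\mathrm{scf}(G)$ is the space of functions constant on $G\setminus\{1\}$; $\langle\psi,\gamma\rangle=|G|^{-1}\sum_g\psi(g)\overline{\gamma(g)}$. For $n\ge1$, $G^{n-1}=G\times\cdots\times G\times\{1\}$ ($n-1$ copies of $G$), $\mathrm{scf}(G^{n-1})$ is spanned by $\psi_1\otimes\cdots\otimes\psi_{n-1}\otimes\chi^{()}:(g_1,\dots,g_{n-1},1)\mapsto\prod\psi_j(g_j)$ ($\chi^{()}$ trivial character of the trivial group); $\mathrm{scf}(G^{-1}):=\mathbb{C}\chi^\emptyset$. $\mathcal{H}_{(\iota,\alpha,\beta)}=\bigoplus_{n\ge0}\mathrm{scf}(G^{n-1})$ is the graded connected Hopf algebra with unit $\chi^\emptyset$, product $(\gamma_1\otimes\cdots\otimes\gamma_{m-1}\otimes\chi^{()})\cdot(\psi_1\otimes\cdots\otimes\psi_{n-1}\otimes\chi^{()})=\gamma_1\otimes\cdots\otimes\gamma_{m-1}\otimes\iota\otimes\psi_1\otimes\cdots\otimes\psi_{n-1}\otimes\chi^{()}$, coproduct $\Delta(\psi)=\sum_{A\subseteq[n]}\psi^{A}\otimes\psi^{[n]\setminus A}$ for $\psi=\psi_1\otimes\cdots\otimes\psi_{n-1}\otimes\chi^{()}$, where $\psi^\emptyset=\chi^\emptyset$; for nonempty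 $A=\{a_1<\dots<a_k\}$, $\psi^{A}=\lambda_A\,x_{a_1}\otimes\cdots\otimes x_{a_{k-1}}\otimes\chi^{()}$ with $x_{a_i}=\psi_{a_i}$ if $a_{i+1}=a_i+1$, else $\langle\psi_{a_i},\alpha\rangle\iota$, and $\lambda_A=\langle\psi_{a_k},\alpha\rangle$ if $a_k<n$, $1$ if $a_k=n$; $\psi^{[n]\setminus A}$ is the same with $\beta$ in place of $\alpha$. *)

From HB Require Import structures.
From mathcomp Require Import all_boot all_order all_algebra all_fingroup all_solvable all_field all_character.
Set Implicit Arguments. Unset Strict Implicit. Unset Printing Implicit Defensive.
Import Order.TTheory GRing.Theory Num.Theory.
Local Open Scope ring_scope.

Section ScfHopf.
Variables (gT : finGroupType) (G : {group gT}).

Definition scf (phi : 'CF(G)) : Prop :=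
  forall x y, x \in G -> y \in G -> x != 1%g -> y != 1%g -> phi x = phi y.

(* Value of the pure tensor ps_1 (x) ... (x) ps_{k} (x) chi^() at (z_1,...,z_k,1). *)
Definition tensv (ps : seq 'CF(G)) (zs : seq gT) : algC :=
  \prod_(i < size ps) (nth 0 ps i) (nth 1%g zs i).

Variables (iota alpha beta : 'CF(G)).

(* For psi = ps_1 (x) .. (x) ps_{n-1} (x) chi^() (n = size ps + 1) and a nonempty
   A = s (increasing list of 0-based positions in {0,..,n-1}; position n-1 is the
   last one), lamc c ps s is the scalar lambda_A (with c = alpha, resp. beta)
   and subc c ps s is the list x_{a_1},...,x_{a_{k-1}}. *)
Definition lamc (c : 'CF(G)) (ps : seq 'CF(G)) (s : seq nat) : algC :=
  let l := last 0%N s in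
  if l == size ps then 1 else '[nth 0 ps l, c].

Definition subc (c : 'CF(G)) (ps : seq 'CF(G)) (s : seq nat) : seq 'CF(G) :=
  [seq (if p.2 == p.1.+1 then nth 0 ps p.1 else '[nth 0 ps p.1, c] *: iota)
  | p <- zip s (behead s)].

(* Antipode of the graded connected bialgebra H_(iota,alpha,beta) on pure tensors,
   by the defining recursion  m (S (x) id) Delta = u eps  in positive degree:
     S(psi) = - psi - sum_{emptyset <> A <> [n]} S(psi^A) . psi^{[n]\A}.
   A degree-n element is represented by its function on G^{n-1}, i.e. on
   sequences zs of length n-1; the product of a degree-m element f and a
   degree-(n-m) element g is  zs |-> f(z_1..z_{m-1}) iota(z_m) g(z_{m+1}..z_{n-1}).
   [k] is fuel (at least the degree). *)
Fixpoint antip (k : nat) (ps : seq 'CF(G)) : seq gT -> algC :=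
  match k with
  | 0 => fun _ => 0
  | k'.+1 => fun zs =>
      - tensv ps zs
      - \sum_(A : {set 'I_(size ps).+1} | (A != set0) && (A != setT))
          let s := [seq val i | i <- enum A] in
          let t := [seq val i | i <- enum (~: A)] in
          let m := size s in
          lamc alpha ps s * lamc beta ps t *
          (antip k' (subc alpha ps s) (take m.-1 zs) * iota (nth 1%g zs m.-1)
           * tensv (subc beta ps t) (drop m zs))
  end.

Definition antipode (ps : seq 'CF(G)) : seq gT -> algC := antip (size ps).+1 ps.

End ScfHopf.

From HB Require Import structures.
From mathcomp Require Import all_boot all_order all_algebra all_fingroup all_solvable all_field all_character.
From mathcomp Require Import zify.
Set Implicit Arguments. Unset Strict Implicit. Unset Printing Implicit Defensive.
Import Order.TTheory GRing.Theory Num.Theory.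
Local Open Scope ring_scope.

(* Write k = n - 1 and psi = tau^(x)k.  In the recursion for S(psi), the term of a
   nonempty proper A carries lambda^alpha_A lambda^beta_{[n]\A}, and lambda of a set
   missing the last position n is <tau, alpha> or <tau, beta>.  If both vanish, one of
   A, [n]\A misses n, so every term dies and S(psi) = -psi.  If <tau, alpha> = 1 and
   <tau, beta> = 0, a gap in [n]\A also produces a factor <tau, beta> iota, so only
   A = {1..j} survive; by induction their terms are -(tau-iota)^(x)(j-1) . iota .
   tau^(x)(k-j), and these telescope to tau^(x)k - (tau-iota)^(x)k. *)

Lemma last_iota (d m n : nat) : last d (iota m n.+1) = (m + n)%N.
Proof. by rewrite -addn1 iotaD last_cat. Qed.

Lemma filter_iota_gtn m n j : (j < n)%N ->
  [seq i <- iota m n | m + j < i]%N = iota (m + j).+1 (n - j.+1).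
Proof.
elim: n m j => [//|n IHn] m [|j] jlen /=.
  rewrite addn0 ltnn subn1 /= (@eq_in_filter _ _ predT) ?filter_predT // => i.
  by rewrite mem_iota => /andP[].
by rewrite ltnNge leq_addr /= -addSnnS IHn // addSn.
Qed.

Definition consecutive (s : seq nat) : bool :=
  all (fun p => p.2 == p.1.+1) (zip s (behead s)).

Lemma consecutive_iota x t : consecutive (x :: t) -> x :: t = iota x (size t).+1.
Proof. by elim: t x => [|y t IH] x //= /andP[/eqP <- /IH ->]. Qed.

Definition positions n (A : {set 'I_n}) : seq nat := [seq val i | i <- enum A].

Lemma mem_positions n (A : {set 'I_n}) (i : 'I_n) : (val i \in positions A) = (i \in A).
Proof. by rewrite mem_map ?mem_enum //; apply: val_inj. Qed.

Lemma positions_set n (P : pred nat) : positions [set i : 'I_n | P i] = filter P (iota 0 n).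
Proof.
rewrite /positions -val_enum_ord filter_map /enum_mem -enumT; congr map.
rewrite [X in _ = filter _ X](eq_filter (a2 := predT)) // filter_predT.
by apply: eq_filter => i; rewrite /= inE.
Qed.

Lemma last_positions_ord_max k (A : {set 'I_k.+1}) :
  A != set0 -> last 0%N (positions A) = k -> ord_max \in A.
Proof.
case/set0Pn => a Aa lastA; rewrite -mem_positions [X in X \in _]/= -[X in X \in _]lastA.
by have := mem_positions A a; rewrite Aa; case: (positions A) => [//|x s] _; apply: mem_last.
Qed.

Definition prefix_set k (j : 'I_k) : {set 'I_k.+1} := [set i : 'I_k.+1 | i <= j]%N.

Lemma prefix_set_inj k : injective (@prefix_set k).
Proof.
move=> j1 j2 /setP eq12; apply: val_inj; apply/eqP; rewrite eqn_leq.
have := eq12 (widen_ord (leqnSn k) j1); have := eq12 (widen_ord (leqnSn k) j2).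
by rewrite !inE /= !leqnn => -> <-.
Qed.

Lemma positions_prefix_set k (j : 'I_k) : positions (prefix_set j) = iota 0 j.+1.
Proof. by rewrite (positions_set _ (fun i => i <= 0 + j)%N) filter_iota_leq // ltnS ltnW. Qed.

Lemma positions_suffix_set k (j : 'I_k) :
  positions (~: prefix_set j) = iota j.+1 (k - j.+1).+1.
Proof.
rewrite (_ : ~: _ = [set i : 'I_k.+1 | 0 + j < i]%N); last first.
  by apply/setP => i; rewrite !inE ltnNge.
by rewrite (positions_set _ (fun i => 0 + j < i)%N) filter_iota_gtn ?subSn // ltnS ltnW.
Qed.

Lemma prefix_set_proper k (j : 'I_k) : (prefix_set j != set0) && (prefix_set j != setT).
Proof.
apply/andP; split; first by apply/set0Pn; exists ord0; rewrite inE.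
by apply/eqP => /setP/(_ ord_max); rewrite !inE /= leqNgt ltn_ord.
Qed.

Lemma consecutive_suffix_prefix_set k (A : {set 'I_k.+1}) :
  A != set0 -> A != setT ->
  last 0%N (positions (~: A)) = k -> consecutive (positions (~: A)) ->
  A \in [set prefix_set j | j : 'I_k].
Proof.
move=> A0 AT; have memC := mem_positions (~: A).
case E: (positions (~: A)) memC => [|x t] memC.
  by case/negP: AT; apply/eqP/setP => i; rewrite inE -[i \in A]negbK -in_setC -memC.
move=> lastC /consecutive_iota Et; rewrite Et last_iota in lastC.
have Ai (i : 'I_k.+1) : (i \in A) = (i < x)%N.
  have := memC i; rewrite Et mem_iota addnS lastC ltn_ord andbT inE => xi.
  by rewrite ltnNge xi negbK.
have [a Aa] := set0Pn _ A0; have ltjk : (x.-1 < k)%N by move: Aa; rewrite Ai; lia.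
apply/imsetP; exists (Ordinal ltjk) => //; apply/setP => i.
by rewrite Ai inE /=; move: Aa; rewrite Ai; lia.
Qed.

Lemma sum_over_prefix_sets (R : nmodType) k (F : {set 'I_k.+1} -> R) :
  (forall A, A != set0 -> A != setT -> A \notin [set prefix_set j | j : 'I_k] -> F A = 0) ->
  \sum_(A | (A != set0) && (A != setT)) F A = \sum_(j < k) F (prefix_set j).
Proof.
move=> F0; rewrite (bigID (fun A => A \in [set prefix_set j | j : 'I_k])) /=.
rewrite [X in _ + X]big1 ?addr0; last by move=> A /andP[/andP[A0 AT]]; apply: F0.
rewrite (eq_bigl (fun A => A \in [set prefix_set j | j : 'I_k])); last first.
  by move=> A; rewrite andbC; case: imsetP => [[j _ ->]|//]; rewrite prefix_set_proper.
by rewrite big_imset //= => j1 j2 _ _; apply: prefix_set_inj.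
Qed.

Lemma prodr_sub_telescope (R : pzRingType) (a b : nat -> R) k :
  \prod_(0 <= i < k) a i - \prod_(0 <= i < k) b i =
  \sum_(j < k) (\prod_(0 <= i < j) b i) * (a j - b j) * \prod_(j.+1 <= i < k) a i.
Proof.
elim: k => [|k IHk]; first by rewrite !big_nil big_ord0 subrr.
rewrite big_ord_recr /= [X in _ * X]big_geq // mulr1.
under [in RHS]eq_bigr => j _ do rewrite (big_nat_recr _ _ _ (ltn_ord j)) mulrA.
by rewrite -big_distrl /= -IHk !big_nat_recr //= mulrBl mulrBr !addrA subrK.
Qed.

Section Antipode.
Variables (gT : finGroupType) (G : {group gT}) (io alpha beta tau : 'CF(G)).
Implicit Types (ps : seq 'CF(G)) (c : 'CF(G)) (zs : seq gT) (s : seq nat).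

Lemma tensv_take ps zs n : (size ps <= n)%N -> tensv ps (take n zs) = tensv ps zs.
Proof. by move=> le_ps_n; apply: eq_bigr => i _; rewrite nth_take // (leq_trans _ le_ps_n). Qed.

Lemma tensv_nseq_drop m d c zs :
  tensv (nseq m c) (drop d zs) = \prod_(d <= i < d + m) c (nth 1%g zs i).
Proof.
rewrite /tensv size_nseq -[in RHS](add0n d) big_addn addKn big_mkord.
by apply: eq_bigr => i _; rewrite nth_nseq ltn_ord nth_drop addnC.
Qed.

Lemma tensv_nseq m c zs : tensv (nseq m c) zs = \prod_(0 <= i < m) c (nth 1%g zs i).
Proof. by rewrite -[in LHS](drop0 zs) tensv_nseq_drop. Qed.

Lemma tensv_eq0 ps zs : 0 \in ps -> tensv ps zs = 0.
Proof.
move=> ps0; rewrite /tensv (bigD1 (Ordinal (etrans (index_mem 0 ps) ps0))) //=.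
by rewrite nth_index // cfunE mul0r.
Qed.

Lemma lamc_nseq_last c k s : last 0%N s = k -> lamc c (nseq k tau) s = 1.
Proof. by move=> lastk; rewrite /lamc size_nseq lastk eqxx. Qed.

Lemma lamc_nseq_lt c k s : (last 0%N s < k)%N -> lamc c (nseq k tau) s = '[tau, c].
Proof. by move=> lt_k; rewrite /lamc size_nseq ltn_eqF // nth_nseq lt_k. Qed.

Lemma lamc_nseq_orth c k s : '[tau, c] = 0 -> last 0%N s != k -> lamc c (nseq k tau) s = 0.
Proof.
move=> tau_c lastk; rewrite /lamc size_nseq (negbTE lastk) nth_nseq.
by case: ifP => _; rewrite ?tau_c ?cfdot0l.
Qed.

Lemma subc_nseq_iota c k a n :
  (a + n <= k)%N -> subc io c (nseq k tau) (iota a n.+1) = nseq n tau.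
Proof.
move=> le_k.
have -> : subc io c (nseq k tau) (iota a n.+1) = map (nth 0 (nseq k tau)) (iota a n).
  by elim: n a {le_k} => [|n IHn] a //=; rewrite -IHn /subc /= eqxx.
have le_n : (n <= k - a)%N by rewrite leq_subRL // (leq_trans (leq_addr n a)).
by rewrite map_nth_iota ?size_nseq // drop_nseq take_nseq.
Qed.

Lemma subc_nseq_nonconsecutive c k s :
  '[tau, c] = 0 -> ~~ consecutive s -> 0 \in subc io c (nseq k tau) s.
Proof.
move=> tau_c /allPn[p p_s p_gap]; apply/mapP; exists p => //.
by rewrite (negbTE p_gap) nth_nseq; case: ifP => _; rewrite ?tau_c ?cfdot0l scale0r.
Qed.

Lemma antipode_nseq_orth k zs : '[tau, alpha] = 0 -> '[tau, beta] = 0 ->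
  antipode io alpha beta (nseq k tau) zs = - tensv (nseq k tau) zs.
Proof.
move=> tau_alpha tau_beta; rewrite /antipode /= size_nseq big1 ?subr0 // => A /andP[A0 AT].
have [lastA|/(lamc_nseq_orth tau_alpha) ->] := eqVneq (last 0%N (positions A)) k;
  last by rewrite !mul0r.
have [lastC|/(lamc_nseq_orth tau_beta) ->] := eqVneq (last 0%N (positions (~: A))) k;
  last by rewrite mulr0 mul0r.
have C0 : ~: A != set0 by rewrite -setCT (inj_eq (@setC_inj _)).
by have := last_positions_ord_max C0 lastC; rewrite inE last_positions_ord_max.
Qed.

Lemma antip_nseq_telescope f k zs :
  '[tau, alpha] = 1 -> '[tau, beta] = 0 -> (k < f)%N ->
  antip io alpha beta f (nseq k tau) zs = - tensv (nseq k (tau - io)) zs.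
Proof.
move=> tau_alpha tau_beta; elim: f k zs => [//|f IHf] k zs lt_k_f /=; rewrite size_nseq.
rewrite sum_over_prefix_sets => [|A A0 AT notprefix]; last first.
  have [lastC|/(lamc_nseq_orth tau_beta) ->] := eqVneq (last 0%N (positions (~: A))) k;
    last by rewrite mulr0 mul0r.
  have [consC|/(subc_nseq_nonconsecutive k tau_beta)/tensv_eq0 ->] :=
    boolP (consecutive (positions (~: A))); last by rewrite !mulr0.
  by rewrite (consecutive_suffix_prefix_set A0 AT lastC consC) in notprefix.
pose a i := tau (nth 1%g zs i); pose b i := (tau - io) (nth 1%g zs i).
rewrite (eq_bigr (fun j : 'I_k =>
  - ((\prod_(0 <= i < j) b i) * (a j - b j) * \prod_(j.+1 <= i < k) a i))) => [|j _]; last first.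
  have lt_jk := ltn_ord j; have lt_jf : (j < f)%N by apply: leq_trans lt_jk _; rewrite -ltnS.
  rewrite -/(positions (prefix_set j)) -/(positions (~: prefix_set j)).
  rewrite positions_prefix_set positions_suffix_set size_iota /=.
  rewrite lamc_nseq_lt ?last_iota // lamc_nseq_last ?last_iota ?subnKC // tau_alpha !mul1r.
  rewrite !subc_nseq_iota ?add0n ?subnKC ?(ltnW lt_jk) //.
  rewrite IHf // tensv_take ?size_nseq //.
  have -> : a j - b j = io (nth 1%g zs j) by rewrite /a /b !cfunE opprB addrC subrK.
  by rewrite tensv_nseq_drop tensv_nseq subnKC // -!mulNr.
by rewrite sumrN opprK -prodr_sub_telescope !tensv_nseq addrA addNr add0r.
Qed.
End Antipode.

Theorem mainTheorem11 (gT : finGroupType) (G : {group gT})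
    (iota alpha beta : 'CF(G)) (n : nat) :
  (1 < #|G|)%N ->
  scf iota -> scf alpha -> scf beta ->
  '[iota, alpha] = 1 -> '[iota, beta] = 1 ->
  (1 <= n)%N ->
  (alpha = beta ->
   forall tau : 'CF(G), scf tau -> tau != 0 -> '[tau, beta] = 0 ->
   (forall phi : 'CF(G), scf phi -> exists a b : algC, phi = a *: tau + b *: iota) ->
   forall zs : seq gT, size zs = n.-1 -> all (fun z => z \in G) zs ->
   antipode iota alpha beta (nseq n.-1 tau) zs = - tensv (nseq n.-1 tau) zs)
  /\
  (alpha != beta ->
   forall tau : 'CF(G), scf tau -> '[tau, alpha] = 1 -> '[tau, beta] = 0 ->
   forall zs : seq gT, size zs = n.-1 -> all (fun z => z \in G) zs ->
   antipode iota alpha beta (nseq n.-1 tau) zs = - tensv (nseq n.-1 (tau - iota)) zs).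
Proof.
move=> _ _ _ _ _ _ _; split.
  by move=> <- tau _ _ tau_alpha _ zs _ _; apply: antipode_nseq_orth.
move=> _ tau _ tau_alpha tau_beta zs _ _.
by rewrite /antipode size_nseq; apply: antip_nseq_telescope.
Qed.
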